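(* Consider the setting in the context. Let $\mathcal F=\{i_0,\dots,i_{\bar h-1}\}\subseteq[\bar n]$ be $\bar h$ distinct racks, $p\in[\bar h]$, $S=S_{\lfloor p/(\bar h-\delta+1)\rfloor}$, and let $\mathbf{C}$ be any codeword. (1) Let $b\in[1,u-v]$ and $\mathcal R\subseteq[\bar n]\setminus\mathcal F$ with $|\mathcal R|=\bar d$. For every $m\in[b]$ and every $a\in[l]$ with $a|_S\in\mathcal V_0$, the quantities $\sum_{g=0}^{u-1}\theta^{gm}c_{i_pu+g,a}$, $\sum_{g=0}^{u-1}\theta^{gm}c_{i_pu+g,a(i_p,a_{i_p}\oplus1)}$ and $H_{i_p,i}(a,m)$ for $i\in\mathcal F\setminus\{i_p\}$ are determined by (are linear functions of) the values $\{H_{i_p,j}(a',m): j\in\mathcal R,\ m\in[b],\ a'\in[l],\ a'|_S\in\mathcal V_0\}$. (2) Let $b\in[u-v+1,u]$ and $\mathcal R'\subseteq[\bar n]\setminus\mathcal F$ with $|\mathcal R'|=\bar d+1$. For every $m\in[u-v,b)$ and every $a\in[l]$ with $a|_S\in\mathcal V_0$, the same quantities are determined by (are linear functions of) the values $\{H_{i_p,j}(a',m): j\in\mathcal R',\ m\in[u-v,b),\ a'\in[l],\ a'|_S\in\mathcal V_0\}$.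
   Context: $[N]=\{0,\dots,N-1\}$. Integers: $\bar n$, $u>1$, $\bar k$, $0\le v<u$, $n=\bar nu$, $k=\bar ku+v$, $r=n-k$, $\bar r=\bar n-\bar k$; $\bar d=\bar k+1$; $\bar h,\delta$ with $\delta\in[1,\bar h)$, $\bar d\le\bar n-\bar h$, $\bar h-\delta+2=2^{\bar m}$ for some integer $\bar m\ge1$, and $(\bar h-\delta+1)\mid\bar h$. $l=2^{\bar n}$. $\mathbb{F}$ is a finite field with $|\mathbb{F}|\ge2n+1$ containing an element $\theta$ of multiplicative order $u$; $\xi$ is a primitive element and $\lambda_{i,j}=\xi^{2i+j}$ for $i\in[\bar n]$, $j\in\{0,1\}$. For $a\in[l]$ write $a=(a_{\bar n-1},\dots,a_0)$ in binary, and $a(i,j)$ is $a$ with its $i$-th bit replaced by $j$; $\oplus$ is addition mod 2. The code $\mathbf{C}$ consists of all $(c_{iu+g,a})_{i\in[\bar n],g\in[u],a\in[l]}$ over $\mathbb{F}$ (node $iu+g$ stores $(c_{iu+g,a})_{a\in[l]}$) with $\sum_{i=0}^{\bar n-1}\sum_{g=0}^{u-1}\theta^{gt}\lambda_{i,a_i}^tc_{iu+g,a}=0$ for all $t\in[r]$, $a\in[l]$. For distinct racks $i,j$, $a\in[l]$ and integer $m$, $H_{i,j}(a,m)=\sum_{g=0}^{u-1}\theta^{gm}c_{ju+g,a}+\sum_{g=0}^{u-1}\theta^{gm}c_{ju+g,a(i,a_i\oplus1)}$. $\mathcal V_0\subseteq\mathbb{F}_2^{2^{\bar m}-1}$ is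 the binary Hamming code of length $2^{\bar m}-1$, i.e. the kernel of a $\bar m\times(2^{\bar m}-1)$ binary matrix whose columns are all the nonzero vectors of $\mathbb{F}_2^{\bar m}$. For $q\in[\bar h/(\bar h-\delta+1))$, $S_q=\{i_{q'}: q'\in[q(\bar h-\delta+1),(q+1)(\bar h-\delta+1))\}$. For $J=\{j_0<\dots<j_{e-1}\}\subseteq[\bar n]$, the puncturing $a|_J=(a_{j_{e-1}},\dots,a_{j_0})\in\mathbb{F}_2^{e}$. *)

From HB Require Import structures.
From mathcomp Require Import all_boot all_order all_algebra all_field.
Set Implicit Arguments. Unset Strict Implicit. Unset Printing Implicit Defensive.
Import GRing.Theory.
Local Open Scope ring_scope.

(* An index a in [l], l = 2^nbar, is represented by its binary expansion
   (a_{nbar-1},...,a_0) as a bit vector a : {ffun 'I_nbar -> bool}. *)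
Notation idx nbar := {ffun 'I_nbar -> bool}.

Definition setbit (nbar : nat) (a : idx nbar) (i : 'I_nbar) (j : bool) : idx nbar :=
  [ffun k => if k == i then j else a k].

(* array code content: node i*u+g (rack i, position g) stores (c i g a)_{a in [l]} *)
Definition cw (F : Type) (nbar u : nat) := 'I_nbar -> 'I_u -> idx nbar -> F.

Definition lam (F : fieldType) (xi : F) (nbar : nat) (i : 'I_nbar) (j : bool) : F :=
  xi ^+ (2 * i + j).

Definition codeword (F : fieldType) (nbar u k : nat) (theta xi : F) (c : cw F nbar u)
  : Prop :=
  forall t : nat, (t < nbar * u - k)%N -> forall a : idx nbar,
    \sum_(i < nbar) \sum_(g < u) theta ^+ (g * t) * (lam xi i (a i)) ^+ t * c i g a = 0.

Definition rsum (F : fieldType) (nbar u : nat) (theta : F) (c : cw F nbar u)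
  (j : 'I_nbar) (a : idx nbar) (m : nat) : F :=
  \sum_(g < u) theta ^+ (g * m) * c j g a.

Definition Hval (F : fieldType) (nbar u : nat) (theta : F) (c : cw F nbar u)
  (i j : 'I_nbar) (a : idx nbar) (m : nat) : F :=
  rsum theta c j a m + rsum theta c j (setbit a i (addb (a i) true)) m.

Definition hamming_matrix (mbar : nat) (H0 : 'M['F_2]_(mbar, 2 ^ mbar - 1)) : Prop :=
  (forall t, col t H0 != 0) /\ (forall w : 'cV['F_2]_mbar, w != 0 -> exists t, col t H0 = w).

Definition in_hamming (mbar : nat) (H0 : 'M['F_2]_(mbar, 2 ^ mbar - 1)) (x : seq bool)
  : bool :=
  (size x == (2 ^ mbar - 1)%N) &&
  (H0 *m (\col_(t < 2 ^ mbar - 1) ((nth false x t : nat)%:R : 'F_2)) == 0).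

(* puncturing a|_J = (a_{j_{e-1}},...,a_{j_0}); as a sequence its t-th entry
   is a_{j_t}, j_0 < ... < j_{e-1} the elements of J *)
Definition puncture (nbar : nat) (J : {set 'I_nbar}) (a : idx nbar) : seq bool :=
  [seq a j | j <- enum J].

Definition Sq (nbar hbar : nat) (rk : 'I_hbar -> 'I_nbar) (w q : nat) : {set 'I_nbar} :=
  [set rk q' | q' : 'I_hbar & (q * w <= q' < q.+1 * w)%N].

Definition determined_by (F : fieldType) (nbar u k : nat) (theta xi : F)
  (ip : 'I_nbar) (Rs : {set 'I_nbar}) (lo hi : nat) (inV : pred (idx nbar))
  (Q : cw F nbar u -> F) : Prop :=
  exists coef : 'I_nbar -> nat -> idx nbar -> F,
    forall c : cw F nbar u, codeword k theta xi c ->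
      Q c = \sum_(j in Rs) \sum_(lo <= m' < hi) \sum_(a' | inV a')
              coef j m' a' * Hval theta c ip j a' m'.

(* Since theta has order u,
   the parity check of exponent t = m + u s only sees the sums
   sum_g theta^(gm) c_{iu+g,b}.  Adding the checks at b = a and at
   b = a(i_p, a_{i_p} + 1), each rack i != i_p has the same lambda_{i,a_i} on
   both indices and contributes only through H_{i_p,i}(a, m).  This leaves
   nbar + 1 unknowns whose points lambda^u are distinct (|F| - 1 >= 2 n), so they
   satisfy the checks s < E of a generalized Reed-Solomon code: any unknown is a
   fixed linear combination of any nbar + 1 - E others.  For m < u - v there are
   E = nbar - kbar such checks, for m >= u - v only nbar - kbar - 1, which is
   why one more helper rack is needed in the second case. *)

From HB Require Import structures.
From mathcomp Require Import all_boot all_order all_algebra all_field.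
From mathcomp Require Import ring zify.
Import GRing.Theory.
Set Implicit Arguments. Unset Strict Implicit.
Local Open Scope ring_scope.

Lemma big_option (R : Type) (idx : R) (op : Monoid.com_law idx) (I : finType)
    (G : option I -> R) :
  \big[op/idx]_o G o = op (G None) (\big[op/idx]_i G (Some i)).
Proof.
rewrite (bigD1 None) //=; congr (op _ _).
rewrite (reindex_omap Some id) //=; last by case.
by apply: eq_bigl => i; rewrite eqxx.
Qed.

(* Pair y with the polynomial P vanishing at the nodes outside K other than
   x i0: P has degree < E, so the hypotheses kill sum_i w i * P.[x i] * y i. *)
Lemma grs_coord_determined (F : fieldType) (I : finType) (x w : I -> F)
    (K : {set I}) (E : nat) (i0 : I) :
  injective x -> w i0 != 0 -> (#|~: K| <= E)%N -> i0 \notin K ->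
  exists d : I -> F, forall y : I -> F,
    (forall s, (s < E)%N -> \sum_i w i * x i ^+ s * y i = 0) ->
    y i0 = \sum_(j in K) d j * y j.
Proof.
move=> x_inj w0_neq0 cardK i0K.
pose P := \prod_(i in ~: K :\ i0) ('X - (x i)%:P).
have sizeP : (size P <= E)%N.
  rewrite /P -big_enum -(big_map x predT (fun z => 'X - z%:P)) size_prod_XsubC.
  by rewrite size_map -cardE; move: cardK; rewrite (cardsD1 i0 (~: K)) inE i0K.
have P_root i : i \in ~: K :\ i0 -> P.[x i] = 0.
  by move=> Hi; rewrite /P horner_prod (bigD1 i) //= hornerXsubC subrr mul0r.
have P_i0 : P.[x i0] != 0.
  rewrite /P horner_prod; apply/prodf_neq0 => i; rewrite !inE => /andP[Hi _].
  by rewrite hornerXsubC subr_eq0 (inj_eq x_inj) eq_sym.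
exists (fun j => - (w i0 * P.[x i0])^-1 * (w j * P.[x j])) => y Hy.
have annihilated : \sum_i w i * y i * P.[x i] = 0.
  transitivity (\sum_(s < E) P`_s * \sum_i w i * x i ^+ s * y i).
    symmetry; under eq_bigr do rewrite mulr_sumr.
    rewrite exchange_big /=; apply: eq_bigr => i _.
    by rewrite (horner_coef_wide _ sizeP) mulr_sumr; apply: eq_bigr => s _; ring.
  by apply: big1 => s _; rewrite Hy // mulr0.
rewrite (bigID (fun i => i \notin K)) /= (bigD1 i0) //= in annihilated.
rewrite [X in _ + X + _]big1 ?addr0 in annihilated; last first.
  by move=> i /andP[iK ii0]; rewrite P_root ?mulr0 // !inE ii0 iK.
apply: (mulfI (mulf_neq0 w0_neq0 P_i0)); rewrite mulr_sumr.
have -> : \sum_(j in K) w i0 * P.[x i0] * (- (w i0 * P.[x i0])^-1 * (w j * P.[x j]) * y j)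
    = - \sum_(i | ~~ (i \notin K)) w i * y i * P.[x i].
  rewrite -sumrN; apply: eq_big => [i|i _]; first by rewrite negbK.
  by rewrite !mulrA mulrN divff ?mulf_neq0 // mulN1r; ring.
by apply/eqP; rewrite -subr_eq0 opprK -[X in _ == X]annihilated; apply/eqP; ring.
Qed.

Lemma prim_expr_inj (R : nzRingType) (N : nat) (z : R) (i j : nat) :
  N.-primitive_root z -> (i < N)%N -> (j < N)%N -> z ^+ i = z ^+ j -> i = j.
Proof.
by move=> z_prim iN jN /eqP; rewrite (eq_prim_root_expr z_prim) !modn_small // => /eqP.
Qed.

Lemma lam_expn_inj (F : fieldType) (xi : F) (N nbar u : nat) (i i' : 'I_nbar) (j j' : bool) :
  (0 < u)%N -> (2 * nbar * u <= N)%N -> N.-primitive_root xi ->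
  lam xi i j ^+ u = lam xi i' j' ^+ u -> i = i' /\ j = j'.
Proof.
move=> u_gt0 N_big xi_prim; rewrite /lam -!exprM.
have exp_small (i1 : 'I_nbar) (j1 : bool) : ((2 * i1 + j1) * u < N)%N.
  apply: leq_trans N_big; rewrite ltn_pmul2r //.
  by have := ltn_ord i1; case: j1 => /=; lia.
move/(prim_expr_inj xi_prim (exp_small i j) (exp_small i' j'))/eqP.
rewrite eqn_pmul2r // => /eqP eq_exp.
have eq_i : i = i' :> nat by case: j j' eq_exp => [] [] /=; lia.
by split; [apply: val_inj | case: j j' eq_exp => [] [] /=; lia].
Qed.

Lemma codeword_rsum_parity (F : fieldType) (nbar u k : nat) (theta xi : F)
    (c : cw F nbar u) (b : idx nbar) (m s : nat) :
  u.-primitive_root theta -> codeword k theta xi c -> (m + u * s < nbar * u - k)%N ->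
  \sum_i lam xi i (b i) ^+ (m + u * s) * rsum theta c i b m = 0.
Proof.
move=> theta_prim c_code t_small; rewrite -[RHS](c_code _ t_small b).
apply: eq_bigr => i _; rewrite /rsum mulr_sumr; apply: eq_bigr => g _.
have -> : theta ^+ (g * (m + u * s)) = theta ^+ (g * m).
  by rewrite mulnDr exprD mulnCA [theta ^+ (u * _)]exprM (prim_expr_order theta_prim) expr1n mulr1.
by rewrite mulrCA mulrA.
Qed.

Lemma determined_by_single (F : fieldType) (nbar u k : nat) (theta xi : F)
    (ip : 'I_nbar) (R : {set 'I_nbar}) (lo hi : nat) (inV : pred (idx nbar))
    (m : nat) (a : idx nbar) (Q : cw F nbar u -> F) (d : 'I_nbar -> F) :
  (lo <= m < hi)%N -> inV a ->
  (forall c, codeword k theta xi c -> Q c = \sum_(j in R) d j * Hval theta c ip j a m) ->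
  determined_by k theta xi ip R lo hi inV Q.
Proof.
move=> m_range a_in Q_eq.
exists (fun j m' a' => if (m' == m) && (a' == a) then d j else 0) => c c_code.
rewrite Q_eq //; apply: eq_bigr => j _.
rewrite (bigD1_seq m) ?mem_index_iota ?iota_uniq //= (bigD1 a) //= !eqxx /=.
rewrite big1 => [|a' /andP[_ /negbTE ->]]; last by rewrite /= mul0r.
rewrite addr0 big1 ?addr0 // => m' /negbTE m'_neq.
by rewrite big1 // => a' _; rewrite m'_neq mul0r.
Qed.

Section RackRepair.

Variables (F : fieldType) (nbar u k N : nat) (theta xi : F) (ip : 'I_nbar) (a : idx nbar).
Hypotheses (u_gt0 : (0 < u)%N) (N_big : (2 * nbar * u <= N)%N)
  (theta_prim : u.-primitive_root theta) (xi_prim : N.-primitive_root xi).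

Local Notation a_flip := (setbit a ip (addb (a ip) true)).

(* The nbar + 1 unknowns of the repair of rack ip at the index pair
   {a, a(ip, a_ip + 1)}: None is rack ip at the flipped index, Some ip is rack
   ip at a, and Some i (i != ip) is the pair sum H_{ip,i}(a, m). *)
Definition repair_point (o : option 'I_nbar) : F :=
  if o is Some i then lam xi i (a i) else lam xi ip (addb (a ip) true).

Definition repair_value (c : cw F nbar u) (m : nat) (o : option 'I_nbar) : F :=
  match o with
  | None => rsum theta c ip a_flip m
  | Some i => if i == ip then rsum theta c ip a m else Hval theta c ip i a m
  end.

Lemma repair_point_expn_inj : injective (fun o => repair_point o ^+ u).
Proof.
move=> [i|] [i'|] //= /(lam_expn_inj u_gt0 N_big xi_prim) [eq_i bit_eq].
- by rewrite eq_i.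
- by move: bit_eq; rewrite eq_i addbT; case: (a ip).
- by move: bit_eq; rewrite -eq_i addbT; case: (a ip).
Qed.

Lemma repair_point_neq0 (o : option 'I_nbar) : repair_point o != 0.
Proof.
have N_gt0 : (0 < N)%N by apply: leq_trans N_big; have := ltn_ord ip; nia.
by case: o => [i|]; rewrite expf_neq0 // (prim_root_eq0 xi_prim) -lt0n.
Qed.

Lemma repair_parity (c : cw F nbar u) (m s : nat) :
  codeword k theta xi c -> (m + u * s < nbar * u - k)%N ->
  \sum_o repair_point o ^+ m * (repair_point o ^+ u) ^+ s * repair_value c m o = 0.
Proof.
move=> c_code t_small; rewrite -[RHS](addr0 0).
rewrite -[X in _ = X + _](codeword_rsum_parity a theta_prim c_code t_small).
rewrite -[X in _ = _ + X](codeword_rsum_parity a_flip theta_prim c_code t_small).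
under eq_bigr do rewrite -exprM -exprD.
rewrite big_option (bigD1 ip) //= [X in _ = X + _](bigD1 ip) //=.
rewrite [X in _ = _ + X](bigD1 ip) //= !ffunE eqxx.
have -> : \sum_(i < nbar | i != ip) lam xi i (a i) ^+ (m + u * s) * repair_value c m (Some i)
  = \sum_(i < nbar | i != ip) lam xi i (a i) ^+ (m + u * s) * rsum theta c i a m
  + \sum_(i < nbar | i != ip) lam xi i (a_flip i) ^+ (m + u * s) * rsum theta c i a_flip m.
  rewrite -big_split; apply: eq_bigr => i /negbTE i_neq /=.
  by rewrite i_neq /Hval ffunE i_neq mulrDr.
rewrite /=; ring.
Qed.

Lemma repair_value_determined (R : {set 'I_nbar}) (E m : nat) (o : option 'I_nbar) :
  ip \notin R -> (nbar.+1 <= #|R| + E)%N ->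
  (forall s, (s < E)%N -> (m + u * s < nbar * u - k)%N) -> o \notin Some @: R ->
  exists d : 'I_nbar -> F, forall c, codeword k theta xi c ->
    repair_value c m o = \sum_(j in R) d j * Hval theta c ip j a m.
Proof.
move=> ipR Rbig t_small o_out.
have cardK : (#|~: (Some @: R)| <= E)%N.
  by have := cardsC (Some @: R); rewrite card_option card_ord (card_imset _ Some_inj); lia.
have [d d_spec] := grs_coord_determined (w := fun o => repair_point o ^+ m)
  repair_point_expn_inj (expf_neq0 _ (repair_point_neq0 o)) cardK o_out.
exists (fun j => d (Some j)) => c c_code.
rewrite (d_spec (repair_value c m)) => [|s /t_small]; last exact: repair_parity.
rewrite big_imset /=; last by move=> ? ? _ _ [].
apply: eq_bigr => j jR /=; case: eqP => // j_ip.
by move: ipR; rewrite -j_ip jR.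
Qed.

Lemma rack_repair (R : {set 'I_nbar}) (E m lo hi : nat) (inV : pred (idx nbar)) :
  (lo <= m < hi)%N -> inV a -> ip \notin R -> (nbar.+1 <= #|R| + E)%N ->
  (forall s, (s < E)%N -> (m + u * s < nbar * u - k)%N) ->
  [/\ determined_by k theta xi ip R lo hi inV (fun c : cw F nbar u => rsum theta c ip a m),
      determined_by k theta xi ip R lo hi inV (fun c : cw F nbar u => rsum theta c ip a_flip m)
    & forall i, i \notin R -> i != ip ->
      determined_by k theta xi ip R lo hi inV (fun c : cw F nbar u => Hval theta c ip i a m)].
Proof.
move=> m_range a_in ipR Rbig t_small.
have determined o : o \notin Some @: R ->
    determined_by k theta xi ip R lo hi inV (fun c : cw F nbar u => repair_value c m o).
  by case/(repair_value_determined ipR Rbig t_small) => d; exact: determined_by_single.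
split=> [||i iR i_ip].
- by have := determined (Some ip); rewrite /= eqxx (mem_imset _ _ Some_inj); apply.
- by apply: (determined None); apply/imsetP => -[].
- by have := determined (Some i); rewrite /= (negbTE i_ip) (mem_imset _ _ Some_inj); apply.
Qed.

End RackRepair.

Theorem lemma4 (F : finFieldType) (nbar u kbar v hbar delta mbar : nat) (theta xi : F)
  (Hu : (1 < u)%N) (Hv : (v < u)%N)
  (Hdelta1 : (1 <= delta)%N) (Hdelta2 : (delta < hbar)%N)
  (Hdbar : (kbar.+1 <= nbar - hbar)%N)
  (Hmbar1 : (1 <= mbar)%N) (Hmbar : (hbar - delta + 2 = 2 ^ mbar)%N)
  (Hdiv : ((hbar - delta + 1) %| hbar)%N)
  (HF : (2 * (nbar * u) + 1 <= #|F|)%N)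
  (Htheta : u.-primitive_root theta) (Hxi : (#|F|.-1).-primitive_root xi)
  (H0 : 'M['F_2]_(mbar, 2 ^ mbar - 1)) (HH0 : hamming_matrix H0)
  (rk : 'I_hbar -> 'I_nbar) (Hrk : injective rk) (p : 'I_hbar) :
  let k := (kbar * u + v)%N in
  let S := Sq rk (hbar - delta + 1) (p %/ (hbar - delta + 1)) in
  let inV := fun a : idx nbar => in_hamming H0 (puncture S a) in
  let Fr := [set rk x | x : 'I_hbar] in
  (forall (b : nat) (R : {set 'I_nbar}),
     (1 <= b <= u - v)%N -> [disjoint R & Fr] -> #|R| = kbar.+1 ->
     forall (m : nat) (a : idx nbar), (m < b)%N -> inV a ->
       [/\ determined_by (u:=u) k theta xi (rk p) R 0 b inV
             (fun c : cw F nbar u => rsum theta c (rk p) a m),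
           determined_by (u:=u) k theta xi (rk p) R 0 b inV
             (fun c : cw F nbar u => rsum theta c (rk p) (setbit a (rk p) (addb (a (rk p)) true)) m)
         & forall i' : 'I_hbar, i' != p ->
           determined_by (u:=u) k theta xi (rk p) R 0 b inV
             (fun c : cw F nbar u => Hval theta c (rk p) (rk i') a m)]) /\
  (forall (b : nat) (R' : {set 'I_nbar}),
     (u - v + 1 <= b <= u)%N -> [disjoint R' & Fr] -> #|R'| = kbar.+2 ->
     forall (m : nat) (a : idx nbar), (u - v <= m < b)%N -> inV a ->
       [/\ determined_by (u:=u) k theta xi (rk p) R' (u - v) b inV
             (fun c : cw F nbar u => rsum theta c (rk p) a m),
           determined_by (u:=u) k theta xi (rk p) R' (u - v) b inV
             (fun c : cw F nbar u => rsum theta c (rk p) (setbit a (rk p) (addb (a (rk p)) true)) m)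
         & forall i' : 'I_hbar, i' != p ->
           determined_by (u:=u) k theta xi (rk p) R' (u - v) b inV
             (fun c : cw F nbar u => Hval theta c (rk p) (rk i') a m)]).
Proof.
move=> k S inV Fr.
have u_gt0 : (0 < u)%N by apply: ltnW.
have N_big : (2 * nbar * u <= #|F|.-1)%N by lia.
have rk_notin (R : {set 'I_nbar}) x : [disjoint R & Fr] -> rk x \notin R.
  by move=> R_out; rewrite (disjointFl R_out) // imset_f.
have rk_neq i' : i' != p -> rk i' != rk p by rewrite (inj_eq Hrk).
split=> [b R /andP[_ b_le] R_out R_card m a m_lt a_in
        |b R /andP[_ b_le] R_out R_card m a m_range a_in].
- have t_small s : (s < nbar - kbar)%N -> (m + u * s < nbar * u - k)%N by rewrite /k; nia.
  have [|det_a det_flip det_H] := rack_repair u_gt0 N_big Htheta Hxi (lo := 0) (m_lt : (0 <= m < b)%N)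
    a_in (rk_notin _ p R_out) _ t_small; first by rewrite R_card; lia.
  by split=> // i' /rk_neq; apply: det_H; apply: rk_notin.
- have t_small s : (s < (nbar - kbar).-1)%N -> (m + u * s < nbar * u - k)%N by rewrite /k; nia.
  have [|det_a det_flip det_H] := rack_repair u_gt0 N_big Htheta Hxi m_range
    a_in (rk_notin _ p R_out) _ t_small; first by rewrite R_card; lia.
  by split=> // i' /rk_neq; apply: det_H; apply: rk_notin.
Qed.
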